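(* Let $\mathcal{X}\subseteq\mathbb{R}^d$ be a closed convex set, let $T\ge 1$, let $(\eta_t)_{t\in[T-1]}$ be positive step sizes, and let $(f_t)_{t\in[T-1]}$ and $(f'_t)_{t\in[T-1]}$ be convex $L$-Lipschitz functions on $\mathcal{X}$. For each $t$ and $x$, let $\nabla f_t(x)$ and $\nabla f'_t(x)$ denote fixed (arbitrary) choices of subgradients of $f_t$ and $f'_t$ at $x$. Let $(x^t)_{t\in[T]}$ and $(y^t)_{t\in[T]}$ be defined by $x^1=y^1\in\mathcal{X}$ and, for all $t\in[T-1]$, $$x^{t+1}=\mathsf{Proj}_{\mathcal{X}}[x^t-\eta_t\nabla f_t(x^t)],\qquad y^{t+1}=\mathsf{Proj}_{\mathcal{X}}[y^t-\eta_t\nabla f'_t(y^t)].$$ Suppose that for every $t\in[T-1]$, $\|\nabla f_t(x^t)-\nabla f'_t(x^t)\|\le a_t$ for scalars $0\le a_t\le 2L$. Let $t_0=\inf\{t: f_t\neq f'_t\}$. Then $$\|x^T-y^T\|\le 2L\sqrt{\sum_{t=t_0}^{T-1}\eta_t^2}+2\sum_{t=t_0+1}^{T-1}\eta_t a_t .$$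
   Context: $\|\cdot\|$ is the Euclidean norm and $\mathsf{Proj}_{\mathcal{X}}$ is Euclidean projection onto $\mathcal{X}$. The functions are assumed $L$-Lipschitz on an open set containing $\mathcal{X}$, so all subgradients have norm at most $L$. Empty sums are $0$. *)

From HB Require Import structures.
From mathcomp Require Import all_boot all_order all_algebra.
From mathcomp Require Import all_classical all_reals topology normedtype.
Set Implicit Arguments. Unset Strict Implicit. Unset Printing Implicit Defensive.
Import Order.TTheory GRing.Theory Num.Theory.
Import numFieldNormedType.Exports.
Local Open Scope classical_set_scope.
Local Open Scope ring_scope.

Definition dotv (R : realType) (d : nat) (u v : 'rV[R]_d) : R :=
  \sum_(i < d) u ord0 i * v ord0 i.

Definition enorm (R : realType) (d : nat) (u : 'rV[R]_d) : R :=
  Num.sqrt (dotv u u).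

Definition convex_set (R : realType) (d : nat) (X : set 'rV[R]_d) : Prop :=
  forall x y (l : R), X x -> X y -> 0 <= l <= 1 -> X (l *: x + (1 - l) *: y).

Definition convex_fun_on (R : realType) (d : nat) (U : set 'rV[R]_d)
  (f : 'rV[R]_d -> R) : Prop :=
  forall x y (l : R), U x -> U y -> 0 <= l <= 1 ->
    f (l *: x + (1 - l) *: y) <= l * f x + (1 - l) * f y.

Definition lipschitz_on (R : realType) (d : nat) (U : set 'rV[R]_d)
  (L : R) (f : 'rV[R]_d -> R) : Prop :=
  forall x y, U x -> U y -> `|f x - f y| <= L * enorm (x - y).

Definition is_subgrad (R : realType) (d : nat) (U : set 'rV[R]_d)
  (f : 'rV[R]_d -> R) (x g : 'rV[R]_d) : Prop :=
  forall y, U y -> f x + dotv g (y - x) <= f y.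

Definition admissible (R : realType) (d : nat) (X : set 'rV[R]_d) (L : R)
  (sg : ('rV[R]_d -> R) -> 'rV[R]_d -> 'rV[R]_d) (f : 'rV[R]_d -> R) : Prop :=
  exists U : set 'rV[R]_d, open U /\ convex_set U /\ X `<=` U /\
    convex_fun_on U f /\ lipschitz_on U L f /\
    (forall x, X x -> is_subgrad U f x (sg f x)).

(* Euclidean projection onto X (a nearest point of X to z, chosen classically;
   unique when X is nonempty closed convex). *)
Definition Proj (R : realType) (d : nat) (X : set 'rV[R]_d) (z : 'rV[R]_d)
  : 'rV[R]_d :=
  xget 0 [set p | X p /\ forall q, X q -> enorm (z - p) <= enorm (z - q)].

(* t0 = inf { t in [T-1] : f t <> f' t }, with the empty infimum encoded as T
   (both sums in the bound are then empty, as with t0 = +oo). *)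
Definition first_change_index (R : realType) (d : nat) (T : nat)
  (f f' : nat -> 'rV[R]_d -> R) (t0 : nat) : Prop :=
  (forall t, (1 <= t < t0)%N -> f t = f' t) /\
  (((1 <= t0)%N /\ (t0 < T)%N /\ f t0 <> f' t0) \/ t0 = T).

From Pilot Require Import Defs.
From HB Require Import structures.
From mathcomp Require Import all_boot all_order all_algebra.
From mathcomp Require Import all_classical all_reals topology normedtype.
From mathcomp Require Import derive.
From mathcomp Require Import ring lra.
Import Order.TTheory GRing.Theory Num.Theory.
Import numFieldNormedType.Exports.
Local Open Scope classical_set_scope.
Local Open Scope ring_scope.

(* Both runs are projected subgradient methods from the same point, and they coincide
   up to the first index t0 at which the losses differ. Projection onto a closed convex
   set is non-expansive, so with u = x^t - y^t and g, g' the two subgradients,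
   |x^(t+1) - y^(t+1)|^2 <= |u|^2 - 2 eta_t <u, g - g'> + eta_t^2 |g - g'|^2.
   Splitting g - g' through the subgradient of f'_t at x^t gives an error of norm at
   most a_t plus a term that is nonnegative by monotonicity of subgradients, and
   |g - g'| <= 2L. Hence delta_t = |x^t - y^t| satisfies
   delta_(t+1)^2 <= delta_t^2 + 2 eta_t a_t delta_t + (2 L eta_t)^2 with delta_(t0) = 0,
   and induction shows delta_t <= 2L sqrt(sum eta_s^2) + 2 sum eta_s a_s, the term a_(t0)
   dropping out because delta_(t0) = 0. *)

Section Euclidean.
Context {R : realType} {d : nat}.
Implicit Types (u v w : 'rV[R]_d) (l : R).

Lemma dotvC u v : dotv u v = dotv v u.
Proof. by apply: eq_bigr => i _; rewrite mulrC. Qed.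

Lemma dotvDl u v w : dotv (u + v) w = dotv u w + dotv v w.
Proof. by rewrite /dotv -big_split; apply: eq_bigr => i _; rewrite mxE mulrDl. Qed.

Lemma dotvNl u w : dotv (- u) w = - dotv u w.
Proof. by rewrite /dotv -sumrN; apply: eq_bigr => i _; rewrite mxE mulNr. Qed.

Lemma dotvZl l u w : dotv (l *: u) w = l * dotv u w.
Proof. by rewrite /dotv mulr_sumr; apply: eq_bigr => i _; rewrite mxE mulrA. Qed.

Lemma dotvBl u v w : dotv (u - v) w = dotv u w - dotv v w.
Proof. by rewrite dotvDl dotvNl. Qed.

Lemma dotvDr u v w : dotv w (u + v) = dotv w u + dotv w v.
Proof. by rewrite dotvC dotvDl !(dotvC w). Qed.

Lemma dotvNr u w : dotv w (- u) = - dotv w u.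
Proof. by rewrite dotvC dotvNl dotvC. Qed.

Lemma dotvZr l u w : dotv w (l *: u) = l * dotv w u.
Proof. by rewrite dotvC dotvZl dotvC. Qed.

Lemma dotvBr u v w : dotv w (u - v) = dotv w u - dotv w v.
Proof. by rewrite dotvDr dotvNr. Qed.

Lemma dotvv_ge0 u : 0 <= dotv u u.
Proof. by apply: sumr_ge0 => i _; rewrite -expr2 sqr_ge0. Qed.

Lemma dotvv_eq0 u : dotv u u = 0 -> u = 0.
Proof.
move=> uu0; have sum_sqr0 : \sum_(j < d) u ord0 j ^+ 2 = 0.
  by rewrite -[RHS]uu0; apply: eq_bigr => j _; rewrite expr2.
apply/rowP => i; rewrite mxE; apply/eqP; rewrite -sqrf_eq0; apply/eqP.
exact: (psumr_eq0P (fun j _ => sqr_ge0 (u ord0 j)) sum_sqr0).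
Qed.

Lemma dotvv_subZ u v l :
  dotv (u - l *: v) (u - l *: v) = dotv u u - 2 * l * dotv u v + l ^+ 2 * dotv v v.
Proof. by rewrite dotvBl !dotvBr !dotvZl !dotvZr (dotvC v u); ring. Qed.

Lemma enorm_ge0 u : 0 <= enorm u.
Proof. exact: sqrtr_ge0. Qed.

Lemma enorm_sqr u : enorm u ^+ 2 = dotv u u.
Proof. by rewrite /enorm sqr_sqrtr // dotvv_ge0. Qed.

Lemma enorm0 : enorm (0 : 'rV[R]_d) = 0.
Proof. by rewrite /enorm /dotv big1 ?sqrtr0 // => i _; rewrite mxE mul0r. Qed.

Lemma enormZ l u : enorm (l *: u) = `|l| * enorm u.
Proof. by rewrite /enorm dotvZl dotvZr mulrA -expr2 sqrtrM ?sqr_ge0 // sqrtr_sqr. Qed.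

Lemma ler_enorm u v : (enorm u <= enorm v) = (dotv u u <= dotv v v).
Proof. by rewrite ler_sqrt ?dotvv_ge0. Qed.

Lemma dotv_sqr_le u v : dotv u v ^+ 2 <= dotv u u * dotv v v.
Proof.
have [vv0|vv_neq0] := eqVneq (dotv v v) 0.
  by rewrite vv0 (dotvv_eq0 _ vv0) /dotv big1 ?expr0n ?mulr0 // => i _; rewrite mxE mulr0.
have vv_gt0 : 0 < dotv v v by rewrite lt_def vv_neq0 dotvv_ge0.
(* the residual (v.v) u - (u.v) v has a nonnegative square *)
have := dotvv_ge0 (dotv v v *: u - dotv u v *: v).
rewrite dotvv_subZ !dotvZl !dotvZr => res_ge0.
have : 0 <= dotv v v * (dotv u u * dotv v v - dotv u v ^+ 2) by lra.
by rewrite pmulr_rge0 // subr_ge0.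
Qed.

Lemma normr_dotv_le u v : `|dotv u v| <= enorm u * enorm v.
Proof.
by rewrite -sqrtr_sqr /enorm -sqrtrM ?dotvv_ge0 // ler_sqrt ?mulr_ge0 ?dotvv_ge0 ?dotv_sqr_le.
Qed.

Lemma enormB_le u v : enorm (u - v) <= enorm u + enorm v.
Proof.
rewrite -(@ler_pXn2r _ 2) ?nnegrE ?addr_ge0 ?enorm_ge0 //.
have := normr_dotv_le u v; rewrite ler_norml => /andP[uv_ge _].
have := dotvv_subZ u v 1; rewrite scale1r -!enorm_sqr => ->.
have := enorm_ge0 u; have := enorm_ge0 v; nra.
Qed.

Lemma dotvv_continuous : continuous (fun u : 'rV[R]_d => dotv u u).
Proof.
apply: continuous_big => [|i _]; first exact: add_continuous.
have coord_i : continuous (fun u : 'rV[R]_d => u ord0 i) := @coord_continuous _ 1 d ord0 i.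
by move=> u; apply: continuousM; apply: coord_i.
Qed.

Lemma mx_norm_le_enorm u : `|u| <= enorm u.
Proof.
rewrite [leLHS]/Num.norm /= mx_normrE; apply: bigmax_le => [|[i j] _ /=].
  exact: enorm_ge0.
rewrite (ord1 i) -sqrtr_sqr /enorm ler_sqrt ?dotvv_ge0 // /dotv (bigD1 j) //= -expr2.
by rewrite lerDl sumr_ge0 // => k _; rewrite -expr2 sqr_ge0.
Qed.

End Euclidean.

Section Projection.
Context {R : realType} {d : nat} (X : set 'rV[R]_d).
Implicit Types (p q z w : 'rV[R]_d).

Hypothesis closedX : closed X.

Lemma nearest_point_exists z p0 : X p0 ->
  exists p, X p /\ forall q, X q -> enorm (z - p) <= enorm (z - q).
Proof.
move=> Xp0; pose dist2 q := dotv (z - q) (z - q).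
have dist2_cont : continuous dist2.
  have sub_cont : continuous (fun q => z - q).
    by move=> q; apply: continuousB; [exact: cst_continuous | exact: cvg_id].
  by move=> q; exact: (continuous_comp (sub_cont q) (dotvv_continuous _)).
(* minimize over the compact part of X that is no farther from z than p0 *)
pose K := X `&` dist2 @^-1` [set r | r <= dist2 p0].
have closedK : closed K.
  apply: closedI => //; apply: preimage_closed; last exact: closed_le.
  by move=> q _; apply: dist2_cont.
have boundedK : bounded_set K.
  exists (`|z| + enorm (z - p0)); split; first exact: num_real.
  move=> M M_gt q [_ Kq]; apply: le_trans (ltW M_gt).
  rewrite -[q](subKr z) (le_trans (ler_normB _ _)) // lerD2l.
  by apply: le_trans (mx_norm_le_enorm _) _; rewrite ler_enorm.
have [p /set_mem[Xp _] p_min] := compact_EVT_min (ex_intro _ p0 (conj Xp0 (lexx _)))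
  (bounded_closed_compact boundedK closedK) (continuous_subspaceT dist2_cont).
exists p; split => // q Xq; rewrite ler_enorm.
have [q_near|q_far] := leP (dist2 q) (dist2 p0).
  by apply: p_min; rewrite inE; exact: (conj Xq q_near).
by apply: le_trans (ltW q_far); apply: p_min; rewrite inE; exact: (conj Xp0 (lexx _)).
Qed.

Lemma ProjP z p0 : X p0 ->
  X (Proj X z) /\ forall q, X q -> enorm (z - Proj X z) <= enorm (z - q).
Proof.
by move=> Xp0; have := xgetPex 0 (nearest_point_exists z p0 Xp0).
Qed.

Hypothesis convexX : convex_set X.

Lemma nearest_point_obtuse z p q : X p -> X q ->
  (forall r, X r -> enorm (z - p) <= enorm (z - r)) -> dotv (z - p) (q - p) <= 0.
Proof.
move=> Xp Xq p_min; set c := dotv (z - p) (q - p); set n := dotv (q - p) (q - p).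
rewrite leNgt; apply/negP => c_gt0.
have n_ge0 : 0 <= n by exact: dotvv_ge0.
(* moving from p towards q by the fraction l = c / (n + c) gets strictly closer to z *)
pose l := c / (n + c).
have nc_gt0 : 0 < n + c by lra.
have l_gt0 : 0 < l by rewrite divr_gt0.
have l_le1 : l <= 1 by rewrite ler_pdivrMr // mul1r; lra.
have lnc : l * (n + c) = c by rewrite mulfVK // gt_eqF.
have /p_min := convexX q p l Xq Xp (introT andP (conj (ltW l_gt0) l_le1)).
have -> : z - (l *: q + (1 - l) *: p) = (z - p) - l *: (q - p).
  by apply/rowP => i; rewrite !mxE; ring.
rewrite ler_enorm dotvv_subZ -/c -/n => closer.
have : l * (2 * c) <= l * (l * n) by lra.
by rewrite ler_pM2l //; nra.
Qed.

Lemma Proj_nonexpansive z w p0 : X p0 ->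
  enorm (Proj X z - Proj X w) <= enorm (z - w).
Proof.
move=> Xp0; have [Xp p_min] := ProjP z p0 Xp0; have [Xq q_min] := ProjP w p0 Xp0.
set p := Proj X z in Xp p_min *; set q := Proj X w in Xq q_min *.
have obtuse_p := nearest_point_obtuse z p q Xp Xq p_min.
have obtuse_q := nearest_point_obtuse w q p Xq Xp q_min.
have sum_obtuse : dotv (z - p) (q - p) + dotv (w - q) (p - q) =
    dotv (p - q) (p - q) - dotv (z - w) (p - q).
  rewrite -(opprB p q) dotvNr addrC -!dotvBl; congr dotv.
  by apply/rowP => i; rewrite !mxE; ring.
have := normr_dotv_le (z - w) (p - q); rewrite ler_norml => /andP[_ cs].
have := enorm_ge0 (p - q); have := enorm_ge0 (z - w).
rewrite -enorm_sqr in sum_obtuse; nra.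
Qed.

End Projection.

Section Subgradients.
Context {R : realType} {d : nat}.
Implicit Types (U X : set 'rV[R]_d) (f : 'rV[R]_d -> R) (x y g h : 'rV[R]_d).

(* [Defs.] is needed: normedtype also exports a [lipschitz_on] *)
Lemma subgrad_enorm_le {U L f x g} : open U -> Defs.lipschitz_on U L f ->
  is_subgrad U f x g -> U x -> 0 <= L -> enorm g <= L.
Proof.
move=> openU lipf subg Ux L_ge0.
have /nbhs_ballP[e e_gt0 ballU] : nbhs x U by apply: open_nbhs_nbhs.
(* x + eps g stays in U, where eps |g|^2 <= f (x + eps g) - f x <= L eps |g| *)
pose eps := e / (2 * (`|g| + 1)).
have g1_gt0 : 0 < `|g| + 1 by rewrite ltr_wpDl.
have eps_gt0 : 0 < eps by rewrite divr_gt0 // mulr_gt0.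
have Ux' : U (x + eps *: g).
  apply: ballU; rewrite -ball_normE /ball_ /= opprD addrA subrr add0r normrN normrZ.
  rewrite gtr0_norm // /eps mulrAC ltr_pdivrMr ?mulr_gt0 // ltr_pM2l //; lra.
have := subg _ Ux'; have := lipf _ _ Ux' Ux.
rewrite addrAC subrr add0r dotvZr enormZ (gtr0_norm eps_gt0) -enorm_sqr => lip sub.
have : eps * enorm g ^+ 2 <= eps * (L * enorm g).
  by have := ler_norm (f (x + eps *: g) - f x); rewrite mulrCA in lip; lra.
rewrite ler_pM2l // => sqr_le; have := enorm_ge0 g; nra.
Qed.

Lemma subgrad_monotone {U f x y g h} : is_subgrad U f x g -> is_subgrad U f y h ->
  U x -> U y -> 0 <= dotv (x - y) (g - h).
Proof.
move=> subg subh Ux Uy; have := subg _ Uy; have := subh _ Ux.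
rewrite -[y - x]opprB dotvNr => sub_x sub_y.
rewrite dotvBr !(dotvC (x - y)); lra.
Qed.

Lemma admissible_subgrad_le {X L sg f x} : admissible X L sg f -> X x -> 0 <= L ->
  enorm (sg f x) <= L.
Proof.
move=> [U [openU [_ [XU [_ [lipf subg]]]]]] Xx.
exact: subgrad_enorm_le openU lipf (subg _ Xx) (XU _ Xx).
Qed.

Lemma admissible_subgrad_monotone {X L sg f x y} : admissible X L sg f ->
  X x -> X y -> 0 <= dotv (x - y) (sg f x - sg f y).
Proof.
move=> [U [_ [_ [XU [_ [_ subg]]]]]] Xx Xy.
exact: subgrad_monotone (subg _ Xx) (subg _ Xy) (XU _ Xx) (XU _ Xy).
Qed.

End Subgradients.

Lemma Proj_subgrad_step_sqr {R : realType} {d : nat} (X : set 'rV[R]_d) (L : R)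
    (sg : ('rV[R]_d -> R) -> 'rV[R]_d -> 'rV[R]_d) (f f' : 'rV[R]_d -> R)
    (x y : 'rV[R]_d) (eta a : R) :
  closed X -> convex_set X -> admissible X L sg f -> admissible X L sg f' ->
  0 <= L -> 0 < eta -> X x -> X y -> enorm (sg f x - sg f' x) <= a ->
  enorm (Proj X (x - eta *: sg f x) - Proj X (y - eta *: sg f' y)) ^+ 2 <=
    enorm (x - y) ^+ 2 + 2 * (eta * a) * enorm (x - y) + (2 * L * eta) ^+ 2.
Proof.
move=> closedX convexX adm_f adm_f' L_ge0 eta_gt0 Xx Xy gh_le.
set g := sg f x; set h := sg f' x; set g' := sg f' y; set u := x - y.
have step_diff : (x - eta *: g) - (y - eta *: g') = u - eta *: (g - g').
  by apply/rowP => i; rewrite !mxE; ring.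
have nonexp := Proj_nonexpansive X closedX convexX (x - eta *: g) (y - eta *: g') x Xx.
rewrite step_diff in nonexp.
have expand : enorm (u - eta *: (g - g')) ^+ 2 =
    enorm u ^+ 2 - 2 * eta * dotv u (g - g') + eta ^+ 2 * enorm (g - g') ^+ 2.
  by rewrite !enorm_sqr dotvv_subZ.
apply: le_trans (lerXn2r 2 (enorm_ge0 _) (enorm_ge0 _) nonexp) _; rewrite /= expand.
(* the subgradient of f' at x splits the cross term into an error term and a monotone term *)
have cross : - dotv u (g - g') <= a * enorm u.
  have mono : 0 <= dotv u (h - g') := admissible_subgrad_monotone adm_f' Xx Xy.
  have := normr_dotv_le u (g - h); rewrite ler_norml => /andP[cs _].
  have := ler_wpM2l (enorm_ge0 u) gh_le.
  by rewrite -[g - g'](subrKA h) dotvDr; lra.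
have gg' : enorm (g - g') <= 2 * L.
  have := enormB_le g g'.
  have := admissible_subgrad_le adm_f Xx L_ge0.
  have := admissible_subgrad_le adm_f' Xy L_ge0.
  lra.
have := ler_wpM2l (ltW eta_gt0) cross.
have := ler_wpM2l (sqr_ge0 eta) (lerXn2r 2 (enorm_ge0 _) (mulr_ge0 _ L_ge0) gg').
rewrite !exprMn; lra.
Qed.

Lemma sqrt_growth_step {R : realType} (delta delta' B C D w : R) :
  0 <= delta -> 0 <= B -> 0 <= C -> 0 <= w -> delta <= B + C ->
  delta' ^+ 2 <= delta ^+ 2 + 2 * w * delta + D ^+ 2 ->
  delta' <= Num.sqrt (B ^+ 2 + D ^+ 2) + (C + 2 * w).
Proof.
move=> delta_ge0 B_ge0 C_ge0 w_ge0 delta_le step.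
set B' := Num.sqrt (B ^+ 2 + D ^+ 2).
have B'_sqr : B' ^+ 2 = B ^+ 2 + D ^+ 2 by rewrite sqr_sqrtr // addr_ge0 ?sqr_ge0.
have B_le : B <= B' by rewrite -{1}(ger0_norm B_ge0) -sqrtr_sqr ler_sqrt ?lerDl ?addr_ge0 ?sqr_ge0.
apply: le_trans (ler_norm delta') _.
have rhs_ge0 : 0 <= B' + (C + 2 * w) by lra.
rewrite -(@ler_pXn2r _ 2) ?nnegrE ?normr_ge0 //.
rewrite real_normK ?num_real //; apply: (le_trans step).
have : delta * (delta + 2 * w) <= (B + C) * (B + C + 2 * w).
  by apply: ler_pM; lra.
have : 0 <= (B' - B) * (C + 2 * w) by apply: mulr_ge0; lra.
have : 0 <= w * (B + C) by rewrite mulr_ge0 ?addr_ge0.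
nra.
Qed.

Lemma sqr_recursion_bound {R : realType} (L : R) (eta a delta : nat -> R) (t0 T : nat) :
  0 <= L -> (forall t, 0 <= delta t) -> delta t0 = 0 -> (t0 <= T)%N ->
  (forall t, (t0 < t < T)%N -> 0 <= eta t * a t) ->
  (forall t, (t0 <= t < T)%N ->
     delta t.+1 ^+ 2 <= delta t ^+ 2 + 2 * (eta t * a t) * delta t + (2 * L * eta t) ^+ 2) ->
  delta T <= 2 * L * Num.sqrt (\sum_(t0 <= t < T) eta t ^+ 2)
             + 2 * \sum_(t0.+1 <= t < T) eta t * a t.
Proof.
move=> L_ge0 delta_ge0 delta_t0.
have base : delta t0 <= 2 * L * Num.sqrt (\sum_(t0 <= t < t0) eta t ^+ 2)
                         + 2 * \sum_(t0.+1 <= t < t0) eta t * a t.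
  by rewrite delta_t0 !big_geq // sqrtr0 !mulr0 addr0.
elim: T => [|T IH] t0_le etaa_ge0 step; first by move: t0_le base; rewrite leqn0 => /eqP ->.
move: t0_le; rewrite leq_eqVlt ltnS => /orP[/eqP <- // | t0_le_T].
have step_T := step T (introT andP (conj t0_le_T (ltnSn T))).
move: t0_le_T; rewrite leq_eqVlt => /orP[/eqP t0_eq_T | t0_lt_T].
  rewrite -t0_eq_T big_nat1 big_geq // mulr0 addr0 sqrtr_sqr.
  rewrite -t0_eq_T delta_t0 expr0n /= mulr0 !add0r in step_T.
  rewrite -(@ler_pXn2r _ 2) ?nnegrE ?mulr_ge0 ?normr_ge0 //.
  by rewrite exprMn real_normK ?num_real // -exprMn.
have IH_T : delta T <= 2 * L * Num.sqrt (\sum_(t0 <= t < T) eta t ^+ 2)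
                       + 2 * \sum_(t0.+1 <= t < T) eta t * a t.
  apply: IH => [|t /andP[t0_t tT]|t /andP[t0_t tT]]; first exact: ltnW.
    by apply: etaa_ge0; rewrite t0_t ltnW.
  by apply: step; rewrite t0_t ltnW.
set S := \sum_(t0 <= t < T) eta t ^+ 2 in IH_T *.
set A := \sum_(t0.+1 <= t < T) eta t * a t in IH_T *.
have S_ge0 : 0 <= S by apply: sumr_ge0 => t _; exact: sqr_ge0.
have A_ge0 : 0 <= A.
  rewrite /A big_nat_cond; apply: sumr_ge0 => t /andP[/andP[t0_t tT] _].
  by apply: etaa_ge0; rewrite t0_t ltnW.
rewrite big_nat_recr 1?ltnW //= -/S big_nat_recr //= -/A.
have -> : 2 * L * Num.sqrt (S + eta T ^+ 2) =
    Num.sqrt ((2 * L * Num.sqrt S) ^+ 2 + (2 * L * eta T) ^+ 2).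
  rewrite !exprMn sqr_sqrtr // -mulrDr sqrtrM ?mulr_ge0 ?sqr_ge0 //.
  by rewrite -exprMn sqrtr_sqr ger0_norm ?mulr_ge0.
rewrite mulrDr; apply: sqrt_growth_step step_T => //.
- by rewrite !mulr_ge0 ?sqrtr_ge0.
- by rewrite mulr_ge0.
- by apply: etaa_ge0; rewrite t0_lt_T ltnSn.
Qed.

Lemma Proj_iterates_in {R : realType} {d : nat} {X : set 'rV[R]_d} {T : nat}
    {x z : nat -> 'rV[R]_d} :
  closed X -> X (x 1%N) -> (forall t, (1 <= t < T)%N -> x t.+1 = Proj X (z t)) ->
  forall t, (1 <= t <= T)%N -> X (x t).
Proof.
move=> closedX Xx1 x_next; elim=> // -[_ _ //|t] IH /andP[_ tT].
by rewrite x_next ?tT //; exact: (ProjP X closedX _ _ Xx1).1.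
Qed.

Lemma recursions_agree {V P : Type} (Phi : nat -> P -> V -> V) {p q : nat -> P}
    {x y : nat -> V} {T t0 : nat} :
  (1 <= t0)%N -> (t0 <= T)%N -> y 1%N = x 1%N ->
  (forall t, (1 <= t < t0)%N -> p t = q t) ->
  (forall t, (1 <= t < T)%N -> x t.+1 = Phi t (p t) (x t)) ->
  (forall t, (1 <= t < T)%N -> y t.+1 = Phi t (q t) (y t)) ->
  x t0 = y t0.
Proof.
move=> t0_ge1 t0_le_T yx1 pq x_next y_next.
suff agree t : (1 <= t <= t0)%N -> x t = y t by apply: agree; rewrite t0_ge1 leqnn.
elim: t => [//|[_ _|t IH /andP[_ t_lt_t0]]]; first by rewrite yx1.
have t_lt_T : (t.+1 < T)%N := leq_trans t_lt_t0 t0_le_T.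
by rewrite x_next ?t_lt_T // y_next ?t_lt_T // pq ?t_lt_t0 // IH // (ltnW t_lt_t0).
Qed.

Theorem lemma3p1 (R : realType) (d : nat) (X : set 'rV[R]_d) (T : nat)
  (L : R) (eta a : nat -> R) (f f' : nat -> 'rV[R]_d -> R)
  (sg : ('rV[R]_d -> R) -> 'rV[R]_d -> 'rV[R]_d)
  (x y : nat -> 'rV[R]_d) (t0 : nat) :
  closed X -> convex_set X -> (1 <= T)%N ->
  (forall t, (1 <= t < T)%N -> 0 < eta t) ->
  (forall t, (1 <= t < T)%N -> admissible X L sg (f t)) ->
  (forall t, (1 <= t < T)%N -> admissible X L sg (f' t)) ->
  X (x 1%N) -> y 1%N = x 1%N ->
  (forall t, (1 <= t < T)%N ->
     x t.+1 = Proj X (x t - eta t *: sg (f t) (x t))) ->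
  (forall t, (1 <= t < T)%N ->
     y t.+1 = Proj X (y t - eta t *: sg (f' t) (y t))) ->
  (forall t, (1 <= t < T)%N ->
     enorm (sg (f t) (x t) - sg (f' t) (x t)) <= a t /\ 0 <= a t <= 2 * L) ->
  first_change_index T f f' t0 ->
  enorm (x T - y T) <=
    2 * L * Num.sqrt (\sum_(t0 <= t < T) eta t ^+ 2)
    + 2 * \sum_(t0.+1 <= t < T) eta t * a t.
Proof.
move=> closedX convexX T_ge1 eta_gt0 adm_f adm_f' Xx1 y1 x_next y_next a_bound [f_eq t0_cases].
have Xx := Proj_iterates_in closedX Xx1 x_next.
have Xy := Proj_iterates_in closedX (eq_ind_r X Xx1 y1) y_next.
have /andP[t0_ge1 t0_le_T] : (1 <= t0 <= T)%N.
  by case: t0_cases => [[-> [/ltnW -> _]]|->]; rewrite ?T_ge1 ?leqnn.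
have xy_t0 : x t0 = y t0 := recursions_agree (fun t g v => Proj X (v - eta t *: sg g v))
  t0_ge1 t0_le_T y1 f_eq x_next y_next.
case: t0_cases => [[_ [t0_lt_T _]] | t0_eq_T]; last first.
  by rewrite -t0_eq_T xy_t0 subrr enorm0 !big_geq // sqrtr0 !mulr0 addr0.
have in_range t : (t0 <= t)%N -> (t < T)%N -> (1 <= t < T)%N.
  by move=> t0_t ->; rewrite (leq_trans t0_ge1 t0_t).
have [_ /andP[a_t0_ge0 a_t0_le]] := a_bound t0 (in_range t0 (leqnn t0) t0_lt_T).
have L_ge0 : 0 <= L by have := le_trans a_t0_ge0 a_t0_le; rewrite pmulr_rge0.
apply: (sqr_recursion_bound L eta a (fun t => enorm (x t - y t))) => //.
- by move=> t; exact: enorm_ge0.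
- by rewrite /= xy_t0 subrr enorm0.
- move=> t /andP[/ltnW t0_t /(in_range t t0_t) t_range].
  by have [_ /andP[a_ge0 _]] := a_bound t t_range; rewrite mulr_ge0 // ltW // eta_gt0.
- move=> t /andP[t0_t /(in_range t t0_t) t_range].
  have t_in : (1 <= t <= T)%N by case/andP: t_range => -> /ltnW.
  rewrite /= x_next // y_next //.
  exact: Proj_subgrad_step_sqr closedX convexX (adm_f t t_range) (adm_f' t t_range) L_ge0
    (eta_gt0 t t_range) (Xx t t_in) (Xy t t_in) (a_bound t t_range).1.
Qed.
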